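(* During the Part I procedure, suppose a bridge step processes the edge $xy$ and forms a blossom. Let $v$ be a vertex that was odd before this step and lies on the tree path from (the blossom containing) $y$ to the base of the newly formed blossom, and let $uv\notin M$ be an edge with $u$ even (possibly $u$ in a different tree). Then $v$ becomes even in this step, and $\mathrm{lcp}(x)+\mathrm{lcp}(y)\le \mathrm{lcp}(v)+\mathrm{lcp}(u)$.
   Context: Let $G=(V,E)$ be a finite undirected graph and $M$ a matching in $G$; free vertices and $\mathit{mate}(v)$ are as usual. The Part I procedure maintains a search structure $S$: a forest whose nodes are either single (odd) vertices or blossoms (disjoint vertex sets with a distinguished base vertex), each tree rooted at a blossom containing a free vertex. Vertices in $S$ are labelled even (those in blossoms) or odd; vertices not in $S$ are unlabelled. A vertex is born even/odd according to the label it receives when inserted. The procedure maintains $\mathrm{lcp}(v)$ for even vertices and $\mathrm{lcp}_{\mathrm{odd}}(v)$ for vertices born odd. The blossom nodes currently in $S$ are the maximal blossoms. Phase $0$: every free vertex $v$ becomes the root of its own tree as a trivial blossom $\{v\}$ with base $v$, even, $\mathrm{lcp}(v)=0$. For $\Delta=1,2,\dots$, phase $\Delta$ does: (i) if $\Delta$ is even, growth steps: while some even vertex $v$ with $\mathrm{lcp}(v)=\Delta-2$ has a neighbour $x$ not in $S$, add $x$ as an odd child of the blossom containing $v$ with $\mathrm{lcp}_{\mathrm{odd}}(x)=\Delta-1$, and $\mathit{mate}(x)$ as a child of $x$, as a trivial even blossom with $\mathrm{lcp}(\mathit{mate}(x))=\Delta$; (ii) bridge steps: while there is a non-matching edge $xy$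 with $x,y$ even, in different maximal blossoms $B_x,B_y$, and $\mathrm{lcp}(x)+\mathrm{lcp}(y)=2\Delta-2$: if $B_x,B_y$ lie in different trees the procedure stops; otherwise let $B$ be the lowest common ancestor of $B_x,B_y$; every odd vertex $z$ on the tree paths from $B_x$ and $B_y$ to $B$ becomes even with $\mathrm{lcp}(z)=\mathrm{lcp}(x)+1+\mathrm{lcp}(y)-\mathrm{lcp}_{\mathrm{odd}}(z)$, and $B$ together with all blossoms and odd vertices on both paths is merged into one new blossom with base equal to the base of $B$, replacing $B$ in the tree. *)

From mathcomp Require Import all_boot.
Set Implicit Arguments. Unset Strict Implicit. Unset Printing Implicit Defensive.

Inductive label := Unl | Odd | Even.

Definition is_even (l : label) : bool := if l is Even then true else false.
Definition is_odd (l : label) : bool := if l is Odd then true else false.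
Definition is_unl (l : label) : bool := if l is Unl then true else false.

(* A state of the search structure S.
   - [lab w]  : label of w;
   - [base w] : identifier of the forest node containing w (for an even vertex,
                the base vertex of its maximal blossom; for an odd vertex, the
                vertex itself);
   - [par n]  : parent node of the node with identifier n (None for roots);
   - [lcp w]  : lcp(w), meaningful for even w;
   - [lcpo w] : lcp_odd(w), meaningful for vertices born odd. *)
Record state (T : Type) := State {
  lab  : T -> label;
  base : T -> T;
  par  : T -> option T;
  lcp  : T -> nat;
  lcpo : T -> nat }.

Inductive stage := Growing | Bridging.

Section Procedure.
Variables (T : finType) (adj : rel T) (mate : T -> option T).

Definition inM (a b : T) : bool := mate a == Some b.
Definition free (v : T) : bool := mate v == None.

Definition anc (s : state T) (n m : T) : bool :=
  connect (fun a b => par s a == Some b) n m.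

Definition onpath (s : state T) (n a b : T) : bool := anc s a n && anc s n b.

Definition same_tree (s : state T) (a b : T) : Prop := exists r, anc s a r && anc s b r.

Definition is_lca (s : state T) (a b B : T) : Prop :=
  [/\ anc s a B, anc s b B & forall C, anc s a C -> anc s b C -> anc s B C].

Definition init_state : state T :=
  State (fun w => if free w then Even else Unl) id (fun _ => None)
        (fun _ => 0) (fun _ => 0).

Definition grow_cond (s : state T) (d : nat) (v x : T) : Prop :=
  [/\ lab s v = Even, lcp s v = d - 2, adj v x & lab s x = Unl].

Definition grow (s : state T) (d : nat) (v x m : T) : state T :=
  State (fun w => if w == x then Odd else if w == m then Even else lab s w)
        (fun w => if w == x then x else if w == m then m else base s w)
        (fun n => if n == x then Some (base s v)
                  else if n == m then Some x else par s n)
        (fun w => if w == m then d else lcp s w)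
        (fun w => if w == x then d - 1 else lcpo s w).

Definition bridge_cond (s : state T) (d : nat) (x y : T) : Prop :=
  [/\ adj x y, ~~ inM x y, lab s x = Even /\ lab s y = Even,
      base s x != base s y & lcp s x + lcp s y = d.*2 - 2].

Definition merged_node (s : state T) (x y B n : T) : bool :=
  onpath s n (base s x) B || onpath s n (base s y) B.

Definition merged (s : state T) (x y B w : T) : bool :=
  ~~ is_unl (lab s w) && merged_node s x y B (base s w).

Definition form_blossom (s : state T) (x y B : T) : state T :=
  State (fun w => if merged s x y B w then Even else lab s w)
        (fun w => if merged s x y B w then B else base s w)
        (fun n => if merged_node s x y B n then par s n
                  else match par s n with
                       | Some m => if merged_node s x y B m then Some B else Some m
                       | None => None
                       end)
        (fun w => if merged s x y B w && is_odd (lab s w)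
                  then lcp s x + 1 + lcp s y - lcpo s w else lcp s w)
        (lcpo s).

Inductive reach : nat -> stage -> state T -> Prop :=
| reach_init : reach 1 Growing init_state
| reach_grow d s v x m :
    reach d Growing s -> ~~ odd d -> grow_cond s d v x -> mate x = Some m ->
    reach d Growing (grow s d v x m)
| reach_end_growth d s :
    reach d Growing s -> (odd d \/ ~ (exists v x, grow_cond s d v x)) ->
    reach d Bridging s
| reach_blossom d s x y B :
    reach d Bridging s -> bridge_cond s d x y ->
    same_tree s (base s x) (base s y) -> is_lca s (base s x) (base s y) B ->
    reach d Bridging (form_blossom s x y B)
| reach_next_phase d s :
    reach d Bridging s -> ~ (exists x y, bridge_cond s d x y) ->
    reach d.+1 Growing s.

End Procedure.

From mathcomp Require Import all_boot zify.

Set Implicit Arguments.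
Unset Strict Implicit.
Unset Printing Implicit Defensive.

(* Along the procedure, every even vertex has even lcp and every odd vertex
   has odd lcp_odd smaller than the current phase; once the growth steps of a
   phase are over, even vertices of small lcp have no unlabelled neighbour,
   whence lcp_odd(v) <= lcp(u) + 1 for every even u adjacent to an odd v.
   When a bridge xy with lcp(x) + lcp(y) = 2d - 2 turns v even,
   lcp(v) = lcp(x) + lcp(y) + 1 - lcp_odd(v), and the inequality follows from
   the last bound if u was already even, and from lcp_odd < d for both v and u
   if u was odd as well. *)

Section Invariant.
Variables (T : finType) (adj : rel T) (mate : T -> option T).

(* Even vertices u with lcp(u) + 2 < growth_horizon d st have all their
   neighbours in S: growth steps of phase d are still pending for lcp(u) = d - 2
   at stage Growing, and are over at stage Bridging. *)
Definition growth_horizon (d : nat) (st : stage) : nat :=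
  if st is Bridging then d.+1 else d.

Record part1_inv (d : nat) (st : stage) (s : state T) : Prop := {
  phase_gt0 : 0 < d;
  even_lcp : forall w, lab s w = Even -> ~~ odd (lcp s w);
  odd_lcpo : forall w, lab s w = Odd -> odd (lcpo s w);
  lcpo_lt_phase : forall w, lab s w = Odd -> lcpo s w < d;
  grown_neighbour : forall u w, lab s u = Even -> adj u w ->
    lcp s u + 2 < growth_horizon d st -> lab s w <> Unl;
  lcpo_le_lcp_adj : forall u v, lab s u = Even -> lab s v = Odd -> adj u v ->
    lcpo s v <= lcp s u + 1 }.

Lemma part1_inv_init : part1_inv 1 Growing (init_state mate).
Proof. by split=> // w /=; case: (free mate w). Qed.

Lemma part1_inv_grow d s v x m :
  part1_inv d Growing s -> ~~ odd d -> grow_cond adj s d v x ->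
  part1_inv d Growing (grow s d v x m).
Proof.
move=> [d_gt0 evenL oddL ltL grownN lcpoL] d_even [v_even lcp_v adj_vx x_unl].
split=> //= [w | w | w | u w | u w].
- by case: eqP => // _; case: eqP => [_ _ | _ /evenL].
- by case: eqP => [_ _ | _]; [lia | case: eqP => // _ /oddL].
- by case: eqP => [_ _ | _]; [lia | case: eqP => // _ /ltL].
- case: (u =P x) => // _; case: (u =P m) => [_ _ _ | _ u_even uw lt_u]; first lia.
  by case: eqP => // _; case: eqP => // _; apply: grownN u_even uw lt_u.
- case: (u =P x) => // _; case: (u =P m) => [_ _ | _ u_even].
    by case: eqP => [_ _ _ | _]; [lia | case: eqP => // _ /ltL; lia].
  case: (w =P x) => [-> _ adj_ux | _]; last by case: eqP => // _; apply: lcpoL.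
  have [le_u | lt_u] := leqP d (lcp s u + 2); first lia.
  by case: (grownN u x u_even adj_ux lt_u x_unl).
Qed.

Lemma part1_inv_end_growth d s :
  part1_inv d Growing s -> (odd d \/ ~ (exists v x, grow_cond adj s d v x)) ->
  part1_inv d Bridging s.
Proof.
move=> [d_gt0 evenL oddL ltL grownN lcpoL] growth_over.
split=> // u w u_even uw /= lt_u.
have [lt_u' | eq_u] : lcp s u + 2 < d \/ lcp s u + 2 = d by lia.
  exact: grownN lt_u'.
move=> w_unl; case: growth_over => [d_odd | no_growth].
  by have := evenL u u_even; rewrite -eq_u in d_odd; lia.
by apply: no_growth; exists u, w; split=> //; lia.
Qed.

Lemma merged_labelled (s : state T) (x y B w : T) :
  merged s x y B w -> lab s w = Odd \/ lab s w = Even.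
Proof. by case/andP; case: (lab s w); auto. Qed.

(* The truncated subtraction in the new lcp of a merged odd vertex w is
   harmless: lcp_odd(w) < d <= lcp(x) + lcp(y) + 1. *)
Lemma part1_inv_blossom d s x y B :
  part1_inv d Bridging s -> bridge_cond adj mate s d x y ->
  part1_inv d Bridging (form_blossom s x y B).
Proof.
move=> [d_gt0 evenL oddL ltL grownN lcpoL] [_ _ [x_even y_even] _ lcp_xy].
have x_par := evenL x x_even; have y_par := evenL y y_even.
split=> //= [w | w | w | u w | u v].
- case mw: (merged s x y B w) => /=; last exact: evenL.
  case: (merged_labelled mw) => w_lab; rewrite w_lab /= => _; last exact: evenL.
  by have := oddL w w_lab; have := ltL w w_lab; lia.
- by case: (merged s x y B w) => // /oddL.
- by case: (merged s x y B w) => // /ltL.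
- case mu: (merged s x y B u) => /=.
    move=> _ uw; case: (merged_labelled mu) => u_lab; rewrite u_lab /=.
      by have := ltL u u_lab; lia.
    by case: (merged s x y B w) => // lt_u; apply: grownN lt_u.
  by move=> u_even uw lt_u; case: (merged s x y B w) => //; apply: grownN lt_u.
- case: (merged s x y B v) => //=; case mu: (merged s x y B u) => /= u_even v_odd uv.
    case: (merged_labelled mu) => u_lab; rewrite u_lab /=; last exact: lcpoL.
    by have := ltL u u_lab; have := ltL v v_odd; lia.
  exact: lcpoL.
Qed.

Lemma part1_inv_next_phase d s :
  part1_inv d Bridging s -> part1_inv d.+1 Growing s.
Proof.
move=> [d_gt0 evenL oddL ltL grownN lcpoL].
by split=> // w /ltL; lia.
Qed.

Lemma part1_inv_reach d st s : reach adj mate d st s -> part1_inv d st s.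
Proof.
elim=> {d st s} [| d s v x m _ I d_even grow_vx _ | d s _ I growth_over
                 | d s x y B _ I bridge _ _ | d s _ I _].
- exact: part1_inv_init.
- exact: part1_inv_grow I d_even grow_vx.
- exact: part1_inv_end_growth I growth_over.
- exact: part1_inv_blossom I bridge.
- exact: part1_inv_next_phase I.
Qed.

End Invariant.

Theorem lemma3 (T : finType) (adj : rel T) (mate : T -> option T)
  (adj_sym : symmetric adj) (adj_irr : irreflexive adj)
  (M_ok : forall a b, mate a = Some b -> adj a b /\ mate b = Some a)
  (d : nat) (s : state T) (x y B : T) :
  reach adj mate d Bridging s ->
  bridge_cond adj mate s d x y ->
  same_tree s (base s x) (base s y) ->
  is_lca s (base s x) (base s y) B ->
  let s' := form_blossom s x y B in
  forall v u : T,
    lab s v = Odd -> onpath s (base s v) (base s y) B ->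
    adj u v -> ~~ inM mate u v -> lab s' u = Even ->
    lab s' v = Even /\ lcp s x + lcp s y <= lcp s' v + lcp s' u.
Proof.
move=> reach_s [_ _ _ _ lcp_xy] _ _ s' v u v_odd v_path uv _ u_even_after.
have [_ _ _ ltL _ lcpoL] := part1_inv_reach reach_s.
have mv : merged s x y B v by rewrite /merged /merged_node v_odd v_path orbT.
have ltv := ltL v v_odd.
rewrite /s' /= mv v_odd /= in u_even_after *; split=> //.
case mu: (merged s x y B u) u_even_after => /= u_even.
  case: (merged_labelled mu) => u_lab; rewrite u_lab /=.
    by have := ltL u u_lab; lia.
  by have := lcpoL u v u_lab v_odd uv; lia.
by have := lcpoL u v u_even v_odd uv; lia.
Qed.
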